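(* Let $k\ge2$ and let $\phi$ be a monotone $[k]$-edge-labeling of $K^{(2)}_n$ that minimizes the number of bad triples among all monotone $[k]$-edge-labelings of $K^{(2)}_n$. Then for every $1\le j\le k-1$, $$|\hat X_{j-1}|+|\hat X_j|\le|\hat X_{j+1}|+|\hat X_{j+2}|+2.$$
   Context: $K^{(2)}_n$ is the complete graph on $[n]$ with its natural order. A $[k]$-edge-labeling $\phi$ assigns to each pair $uv$ ($u<v$) a label $\phi(uv)\in\{1,\dots,k\}$; it is monotone if $\phi(uv)\le\phi(vw)$ whenever $u<v<w$. A triple $u<v<w$ is good if $\phi(uv)<\phi(vw)$ and bad otherwise. Define $\Phi_R(n)=k+1$ and $\Phi_R(v)=\min\{\phi(vw):w>v\}$ for $v<n$. For $0\le i\le k+1$ let $\hat X_i=\{v\in[n]:\Phi_R(v)=i\}$. *)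

From mathcomp Require Import all_boot.
Set Implicit Arguments. Unset Strict Implicit. Unset Printing Implicit Defensive.

(* Vertex set [n] = {1,...,n} is represented by 'I_n = {0,...,n-1} with its
   natural order (vertex i+1 <-> ordinal i).  An edge-labeling is a function
   phi : 'I_n -> 'I_n -> nat where phi u v is the label of the pair uv for
   u < v; values at u >= v are irrelevant. *)

Definition edge_labeling (k n : nat) (phi : 'I_n -> 'I_n -> nat) : Prop :=
  forall u v : 'I_n, u < v -> 1 <= phi u v <= k.

Definition monotone (n : nat) (phi : 'I_n -> 'I_n -> nat) : Prop :=
  forall u v w : 'I_n, u < v -> v < w -> phi u v <= phi v w.

Definition bad_triple (n : nat) (phi : 'I_n -> 'I_n -> nat) (u v w : 'I_n) : bool :=
  [&& u < v, v < w & ~~ (phi u v < phi v w)].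

Definition num_bad (n : nat) (phi : 'I_n -> 'I_n -> nat) : nat :=
  #|[set t : 'I_n * 'I_n * 'I_n | bad_triple phi t.1.1 t.1.2 t.2]|.

Definition PhiR (k n : nat) (phi : 'I_n -> 'I_n -> nat) (v : 'I_n) : nat :=
  if val v == n.-1 then k.+1
  else \big[minn/k.+1]_(w : 'I_n | v < w) phi v w.

Definition Xhat (k n : nat) (phi : 'I_n -> 'I_n -> nat) (i : nat) : {set 'I_n} :=
  [set v : 'I_n | PhiR k phi v == i].

From mathcomp Require Import all_boot zify.
Set Implicit Arguments. Unset Strict Implicit. Unset Printing Implicit Defensive.

(* Since phi is monotone, Phi_R is nondecreasing along [n].  Given j, let z be
   the last vertex with Phi_R z <= j and put i := Phi_R z.  Relabel the edges
   at z, giving label i to the edges into z and i+1 to the edges out of z, and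
   raise to i+2 the labels phi ab = i+1 with Phi_R a = i+1 and Phi_R b >= i+3.
   The result is still monotone; it repairs the bad triples u z w with
   phi uz = phi zw = i and the bad triples u w z with u, w in left_low, and the
   only bad triples it can create are z b c with b in right_next and
   Phi_R c <= i+2.  By minimality of phi,
     |left_i| |right_i| + C(|left_low|, 2)
       <= C(|W|, 2) + |W| (|X_(i+1)| - |W|) + |W| |X_(i+2)|,   W = right_next,
   and with |X_(i-1)| + |X_i| <= |left_i| + |left_low| + 1 and W a subset of
   right_i this gives the inequality at i.  No Phi_R value lies in (i, j], so
   either i = j, or i = j-1 and X_j is empty, or X_(j-1) and X_j are empty. *)

Lemma bigmin_le (I : eqType) (r : seq I) (P : pred I) (F : I -> nat) x w :
  w \in r -> P w -> \big[minn/x]_(i <- r | P i) F i <= F w.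
Proof.
elim: r => // a r IH; rewrite inE big_cons => /orP[/eqP <-|wr] Pw.
  by rewrite Pw geq_minl.
case: (P a); last exact: IH.
exact: leq_trans (geq_minr _ _) (IH wr Pw).
Qed.

Lemma bigmin_attained (I : eqType) (r : seq I) (P : pred I) (F : I -> nat) x :
  \big[minn/x]_(i <- r | P i) F i < x ->
  exists2 w, P w & F w = \big[minn/x]_(i <- r | P i) F i.
Proof.
elim/big_ind: _ => [|a b IHa IHb|w Pw _]; [by rewrite ltnn | | by exists w].
by case: (leqP a b) => [le_ab /IHa|lt_ba /IHb];
  rewrite /minn ?ltnNge ?le_ab // lt_ba.
Qed.

Lemma exists_last_ord n (P : pred 'I_n) v :
  P v -> exists2 z, P z & forall w : 'I_n, z < w -> ~~ P w.
Proof.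
move=> Pv; case: (@arg_maxnP _ v P val Pv) => z Pz z_max.
by exists z => // w lt_zw; apply: contraTN lt_zw => /z_max; rewrite -leqNgt.
Qed.

Lemma ord_ltn_eqF n (u v : 'I_n) : u < v -> (u == v) = false.
Proof. by move=> lt_uv; rewrite -val_eqE ltn_eqF. Qed.

Lemma ord_gtn_eqF n (u v : 'I_n) : u < v -> (v == u) = false.
Proof. by move=> lt_uv; rewrite -val_eqE gtn_eqF. Qed.

Lemma card_exchange (T : finType) (A B D N : {set T}) :
  D \subset A -> B \subset (A :\: D) :|: N -> #|B| + #|D| <= #|A| + #|N|.
Proof.
move=> sDA sB; have := subset_leq_card sB.
have := (leq_card_setU (A :\: D) N).1.
by rewrite cardsD (setIidPr sDA) => h1 h2; have := subset_leq_card sDA; lia.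
Qed.

Lemma card_disjointU (T : finType) (A B : {set T}) :
  [disjoint A & B] -> #|A :|: B| = #|A| + #|B|.
Proof. by move=> dAB; apply/eqP; rewrite (leq_card_setU A B).2. Qed.

Definition pairs n (S : {set 'I_n}) : {set 'I_n * 'I_n} :=
  [set p | [&& p.1 \in S, p.2 \in S & p.1 < p.2]].

Lemma card_pairs n (S : {set 'I_n}) : #|pairs S| = 'C(#|S|, 2).
Proof.
rewrite -cards_draws.
rewrite -(@card_in_imset _ _ (fun p : 'I_n * 'I_n => [set p.1; p.2])).
  apply: eq_card => A; rewrite in_set.
  apply/imsetP/andP => [[[a b]]|[sAS /cards2P[a [b [ab eA]]]]].
    rewrite inE /= => /and3P[aS bS lt_ab] ->; rewrite cards2 neq_ltn lt_ab.
    by split=> //; apply/subsetP => x /set2P[]->.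
  subst A; have [aS bS] : a \in S /\ b \in S.
    by rewrite !(subsetP sAS) ?set21 ?set22.
  case: (ltngtP a b) => [lt_ab|lt_ba|/val_inj eq_ab].
  - by exists (a, b); rewrite // inE /= aS bS lt_ab.
  - by exists (b, a); rewrite 1?setUC // inE /= aS bS lt_ba.
  - by rewrite eq_ab eqxx in ab.
move=> [a b] [c d]; rewrite !inE /= => /and3P[_ _ lt_ab] /and3P[_ _ lt_cd] e.
have mem2 (x y w : 'I_n) : x < y -> w \in [set x; y] -> x <= w <= y.
  by move=> ? /set2P[]->; lia.
have ha : c <= a <= d by apply: mem2; rewrite // -e set21.
have hb : c <= b <= d by apply: mem2; rewrite // -e set22.
have hc : a <= c <= b by apply: mem2; rewrite // e set21.
have hd : a <= d <= b by apply: mem2; rewrite // e set22.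
by congr pair; apply: ord_inj; lia.
Qed.

Lemma mulnpred_addn m : m * m.-1 + m = m * m.
Proof. by case: m => // m; rewrite mulnS addnC. Qed.

Lemma bin2_double m : 'C(m, 2) * 2 = m * m.-1.
Proof. by rewrite -[m.-1]bin1 mul_bin_diag mulnC. Qed.

Lemma cross_term_lt c rho :
  0 < rho -> 2 * (c * rho) + c < c * c + rho * rho + 5 * rho.
Proof.
move=> rho_gt0; case: (leqP c rho) => [le_c_rho|lt_rho_c].
  have [d de] : exists d, rho = c + d by exists (rho - c); lia.
  by subst rho; nia.
have [d ->] : exists d, c = rho + d.+1 by exists (c - rho).-1; lia.
nia.
Qed.

(* The count of the exchange argument, with l, r, c, rho the sizes of left_i,
   right_i, left_low, right_next and s, y those of X_(i+1), X_(i+2). *)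
Lemma exchange_arith l r c rho s y :
  rho <= r -> 0 < r -> rho <= s ->
  l * r + 'C(c, 2) <= 'C(rho, 2) + rho * (s - rho) + rho * y ->
  l + c <= s + y + 1.
Proof.
move=> le_rho_r r_gt0 le_rho_s.
have := bin2_double c; have := bin2_double rho.
have := mulnpred_addn c; have := mulnpred_addn rho.
case: (posnP rho) => [->|rho_gt0] sq_rho sq_c bin_rho bin_c le_pairs.
  have l0 : l = 0 by apply/eqP; rewrite -(eqn_pmul2r r_gt0); apply/eqP; lia.
  nia.
have [e de] : exists e, s = rho + e by exists (s - rho); lia.
subst s; rewrite addKn in le_pairs; rewrite leqNgt; apply/negP => big.
have : l * rho <= l * r by rewrite leq_mul2l le_rho_r orbT.
case: (leqP c (rho + e + y + 2)) => le_c.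
  have [c' dc] : exists c', c + c' = rho + e + y + 2.
    by exists (rho + e + y + 2 - c); lia.
  have : (c + c') * rho = (rho + e + y + 2) * rho by rewrite dc.
  have : c' * rho <= l * rho by rewrite leq_mul2r; lia.
  by have := cross_term_lt c rho_gt0; rewrite !mulnDl; lia.
have : (rho + e + y) * (rho + e + y) < c * c.-1 by apply: ltn_mul; lia.
have : rho * rho.-1 <= rho * rho by rewrite leq_mul2l leq_pred orbT.
by rewrite !mulnDl !mulnDr; lia.
Qed.

Definition bad_triples n (f : 'I_n -> 'I_n -> nat) : {set 'I_n * 'I_n * 'I_n} :=
  [set t | bad_triple f t.1.1 t.1.2 t.2].

Section PhiR.

Variables (k n : nat) (phi : 'I_n -> 'I_n -> nat).
Local Notation g := (PhiR k phi).

Lemma PhiR_last (v : 'I_n) : val v = n.-1 -> g v = k.+1.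
Proof. by rewrite /PhiR => ->; rewrite eqxx. Qed.

Lemma PhiR_le_label (u v : 'I_n) : u < v -> g u <= phi u v.
Proof.
move=> lt_uv; rewrite /PhiR ifF.
  exact: bigmin_le (mem_index_enum _) lt_uv.
by apply/negbTE/eqP => /= u_last; have := ltn_ord v; lia.
Qed.

Hypothesis phi_lab : edge_labeling k phi.

Lemma PhiR_attained (v : 'I_n) :
  val v != n.-1 -> exists2 w : 'I_n, v < w & phi v w = g v.
Proof.
move=> v_last; have lt_last : n.-1 < n by have := ltn_ord v; lia.
have lt_v_last : v < Ordinal lt_last by move: v_last (ltn_ord v) => /=; lia.
have : g v < k.+1.
  by have /andP[_] := phi_lab lt_v_last; have := PhiR_le_label lt_v_last; lia.
rewrite /PhiR (negbTE v_last); exact: bigmin_attained.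
Qed.

Lemma PhiR_gt0 (v : 'I_n) : 0 < g v.
Proof.
have [/PhiR_last -> //|/PhiR_attained[w lt_vw <-]] := eqVneq (val v) n.-1.
by case/andP: (phi_lab lt_vw).
Qed.

Lemma PhiR_leSk (v : 'I_n) : g v <= k.+1.
Proof.
have [/PhiR_last -> //|/PhiR_attained[w lt_vw <-]] := eqVneq (val v) n.-1.
by case/andP: (phi_lab lt_vw) => _ /leqW.
Qed.

Lemma PhiR_le_k_not_last (v : 'I_n) : g v <= k -> val v != n.-1.
Proof. by apply: contraTneq => /PhiR_last ->; rewrite ltnn. Qed.

Hypothesis phi_mono : monotone phi.

Lemma label_le_PhiR (u v : 'I_n) : u < v -> phi u v <= g v.
Proof.
move=> lt_uv.
have [/PhiR_last ->|/PhiR_attained[w lt_vw <-]] := eqVneq (val v) n.-1.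
  by case/andP: (phi_lab lt_uv) => _ /leqW.
exact: phi_mono.
Qed.

Lemma PhiR_homo (u v : 'I_n) : u <= v -> g u <= g v.
Proof.
rewrite leq_eqVlt => /orP[/eqP/val_inj -> //|lt_uv].
exact: leq_trans (PhiR_le_label lt_uv) (label_le_PhiR lt_uv).
Qed.

Lemma ord_lt_of_PhiR_lt (u v : 'I_n) : g u < g v -> u < v.
Proof. by apply: contraTT; rewrite -!leqNgt => /PhiR_homo. Qed.

Section Relabel.

Variable z : 'I_n.
Local Notation i := (g z).
Hypothesis i_lt_k : i < k.
Hypothesis PhiR_gt_after_z : forall w : 'I_n, z < w -> i < g w.

Lemma le_z_of_PhiR_le (v : 'I_n) : g v <= i -> v <= z.
Proof. by apply: contraTT; rewrite -!ltnNge => /PhiR_gt_after_z. Qed.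

(* Raised edges keep the triples (z, a, b) with phi ab = i+1 good once the
   edge za gets label i+1. *)
Definition raise (a b : 'I_n) : bool :=
  [&& g a == i.+1, i.+3 <= g b & phi a b == i.+1].

Definition relabel (a b : 'I_n) : nat :=
  if b == z then i else if a == z then i.+1
  else if raise a b then i.+2 else phi a b.

Lemma relabel_to_z (a : 'I_n) : relabel a z = i.
Proof. by rewrite /relabel eqxx. Qed.

Lemma relabel_from_z (w : 'I_n) : z < w -> relabel z w = i.+1.
Proof. by move=> lt_zw; rewrite /relabel eqxx ord_gtn_eqF. Qed.

Lemma relabel_off_z (a b : 'I_n) :
  a != z -> b != z -> relabel a b = if raise a b then i.+2 else phi a b.
Proof. by move=> az bz; rewrite /relabel (negbTE az) (negbTE bz). Qed.

Lemma label_le_relabel (a b : 'I_n) :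
  a != z -> b != z -> phi a b <= relabel a b.
Proof.
move=> az bz; rewrite relabel_off_z //.
by case: ifP => // /and3P[_ _ /eqP ->].
Qed.

Lemma no_raise_before_z (a b : 'I_n) : b <= z -> raise a b = false.
Proof.
move=> /PhiR_homo le_bz.
by apply/negbTE/and3P => -[_ ? _]; lia.
Qed.

Lemma relabel_edge_labeling : edge_labeling k relabel.
Proof.
have i_gt0 := PhiR_gt0 z.
move=> a b lt_ab.
have [->|bz] := eqVneq b z; first by rewrite relabel_to_z; lia.
have [az|az] := eqVneq a z.
  by move: lt_ab; rewrite az => /relabel_from_z ->; lia.
rewrite relabel_off_z //; case: ifP => [/and3P[_ ? _]|_]; last exact: phi_lab.
by have := PhiR_leSk b; lia.
Qed.

Lemma relabel_monotone : monotone relabel.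
Proof.
move=> a b c lt_ab lt_bc.
have [bz|bz] := eqVneq b z.
  by subst b; rewrite relabel_to_z relabel_from_z.
have [az|az] := eqVneq a z.
  subst a; have cz : c != z by rewrite ord_gtn_eqF // (ltn_trans lt_ab lt_bc).
  rewrite relabel_from_z //; apply: leq_trans (PhiR_gt_after_z lt_ab) _.
  exact: leq_trans (PhiR_le_label lt_bc) (label_le_relabel bz cz).
have [cz|cz] := eqVneq c z.
  subst c; rewrite relabel_to_z relabel_off_z //.
  rewrite (no_raise_before_z _ (ltnW lt_bc)).
  exact: leq_trans (label_le_PhiR lt_ab) (PhiR_homo (ltnW lt_bc)).
rewrite (relabel_off_z az bz); have le_bc := label_le_relabel bz cz.
case: ifP => [/and3P[_ gb _]|_].
  exact: ltnW (leq_trans gb (leq_trans (PhiR_le_label lt_bc) le_bc)).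
exact: leq_trans (phi_mono lt_ab lt_bc) le_bc.
Qed.

Definition left_i := [set u : 'I_n | (u < z) && (phi u z == i)].
Definition right_i := [set w : 'I_n | (z < w) && (phi z w == i)].
Definition left_low := [set u : 'I_n | (g u == i.-1) && (phi u z == i.-1)].
Definition right_next := [set w : 'I_n | (g w == i.+1) && (phi z w == i)].
Definition new_bad_pairs := [set p : 'I_n * 'I_n |
  [&& p.1 \in right_next, p.1 < p.2 & g p.2 <= i.+2]].

Lemma left_low_lt_z (u : 'I_n) : u \in left_low -> u < z.
Proof.
rewrite inE => /andP[/eqP g_u _]; apply: ord_lt_of_PhiR_lt.
by have := PhiR_gt0 z; lia.
Qed.

Lemma bad_fixed_through_z (u w : 'I_n) : u \in left_i -> w \in right_i ->
  bad_triple phi u z w && ~~ bad_triple relabel u z w.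
Proof.
rewrite !inE => /andP[lt_uz /eqP phi_uz] /andP[lt_zw /eqP phi_zw].
rewrite /bad_triple lt_uz lt_zw phi_uz phi_zw relabel_to_z relabel_from_z //.
by rewrite ltnn ltnSn.
Qed.

Lemma bad_fixed_before_z (u w : 'I_n) : (u, w) \in pairs left_low ->
  bad_triple phi u w z && ~~ bad_triple relabel u w z.
Proof.
rewrite inE /= => /and3P[uL wL lt_uw]; have lt_wz := left_low_lt_z wL.
have lt_uz := ltn_trans lt_uw lt_wz.
move: uL wL; rewrite !inE => /andP[/eqP g_u _] /andP[/eqP g_w /eqP phi_wz].
rewrite /bad_triple lt_uw lt_wz relabel_to_z relabel_off_z ?ord_ltn_eqF //.
rewrite (no_raise_before_z _ (ltnW lt_wz)) phi_wz.
have := PhiR_le_label lt_uw; have := label_le_PhiR lt_uw.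
by have := PhiR_gt0 z; lia.
Qed.

Lemma bad_relabel_from_z (b c : 'I_n) : bad_triple relabel z b c ->
  bad_triple phi z b c \/ (b, c) \in new_bad_pairs.
Proof.
move=> /and3P[lt_zb lt_bc]; rewrite -leqNgt.
have [bz cz] : b != z /\ c != z by rewrite !ord_gtn_eqF // (ltn_trans lt_zb).
rewrite relabel_from_z // relabel_off_z //.
case: ifP => [_|no_raise le_bc]; first by rewrite ltnn.
have := PhiR_gt_after_z lt_zb; have := PhiR_le_label lt_bc => le_g_phi lt_i_g.
have g_b : g b = i.+1 by lia.
have phi_bc : phi b c = i.+1 by lia.
have [phi_zb|phi_zb] := eqVneq (phi z b) i.+1.
  by left; rewrite /bad_triple lt_zb lt_bc phi_zb phi_bc ltnn.
right; rewrite !inE /= lt_bc g_b eqxx /=.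
move: no_raise; rewrite /raise g_b phi_bc !eqxx andbT /= => /negbT.
rewrite -ltnNge ltnS => ->.
have := label_le_PhiR lt_zb; have := PhiR_le_label lt_zb.
by rewrite g_b andbT; lia.
Qed.

Lemma bad_relabel_cases (a b c : 'I_n) : bad_triple relabel a b c ->
  bad_triple phi a b c \/ (a = z /\ (b, c) \in new_bad_pairs).
Proof.
have [-> /bad_relabel_from_z[]|az]:= eqVneq a z; [by left | by right | ].
move=> /and3P[lt_ab lt_bc]; rewrite -leqNgt => le_cb; left.
move: le_cb; rewrite /bad_triple lt_ab lt_bc -leqNgt /=.
have [bz|bz] := eqVneq b z.
  by subst b; rewrite relabel_to_z relabel_from_z // ltnn.
have [cz|cz] := eqVneq c z.
  subst c; rewrite relabel_to_z relabel_off_z //.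
  rewrite (no_raise_before_z _ (ltnW lt_bc)).
  by move/(leq_trans (label_le_PhiR lt_bc)).
rewrite (relabel_off_z az bz); have le_bc := label_le_relabel bz cz.
case: ifP => [/and3P[_ gb _]|_] le_cb; last exact: leq_trans le_bc le_cb.
by have := PhiR_le_label lt_bc; lia.
Qed.

Lemma num_bad_relabel :
  num_bad relabel + (#|left_i| * #|right_i| + 'C(#|left_low|, 2)) <=
  num_bad phi + #|new_bad_pairs|.
Proof.
pose through := (fun p : 'I_n * 'I_n => (p.1, z, p.2)) @: setX left_i right_i.
pose before := (fun p : 'I_n * 'I_n => (p.1, p.2, z)) @: pairs left_low.
pose from_z := (fun p : 'I_n * 'I_n => (z, p.1, p.2)) @: new_bad_pairs.
have card_through : #|through| = #|left_i| * #|right_i|.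
  by rewrite card_imset ?cardsX // => -[? ?] [? ?] [-> ->].
have card_before : #|before| = 'C(#|left_low|, 2).
  by rewrite card_imset ?card_pairs // => -[? ?] [? ?] [-> ->].
have disj : [disjoint through & before].
  rewrite disjoints_subset; apply/subsetP => _ /imsetP[[u w] _ ->]; rewrite inE.
  apply/imsetP => -[[u' w']]; rewrite inE /= => /and3P[_ w'L _] [_ ez _].
  by have := left_low_lt_z w'L; rewrite -ez ltnn.
have fixed t : t \in through :|: before ->
    (t \in bad_triples phi) && (t \notin bad_triples relabel).
  rewrite in_setU => /orP[] /imsetP[[u w] uw ->]; rewrite !inE /=.
    by case/setXP: uw; apply: bad_fixed_through_z.
  exact: bad_fixed_before_z.
have := card_exchange (A := bad_triples phi) (B := bad_triples relabel)
  (D := through :|: before) (N := from_z).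
rewrite card_disjointU // card_through card_before => exchange.
apply: leq_trans (exchange _ _) _; last by rewrite leq_add2l leq_imset_card.
  by apply/subsetP => t /fixed /andP[].
apply/subsetP => -[[a b] c]; rewrite inE /= => bad.
have [bad_phi|[-> bc]] := bad_relabel_cases bad; last first.
  by apply/setUP; right; apply/imsetP; exists (b, c).
apply/setUP; left; rewrite inE [_ \in bad_triples phi]inE bad_phi andbT.
by apply/negP => /fixed /andP[_]; rewrite inE bad.
Qed.

Lemma right_next_sub_right : right_next \subset right_i.
Proof.
apply/subsetP => w; rewrite !inE => /andP[/eqP g_w ->]; rewrite andbT.
by apply: ord_lt_of_PhiR_lt; rewrite g_w.
Qed.

Lemma right_next_sub_Xhat : right_next \subset Xhat k phi i.+1.
Proof. by apply/subsetP => w; rewrite !inE => /andP[]. Qed.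

Lemma right_i_gt0 : 0 < #|right_i|.
Proof.
have [w lt_zw phi_zw] := PhiR_attained (PhiR_le_k_not_last (ltnW i_lt_k)).
by apply/card_gt0P; exists w; rewrite inE lt_zw phi_zw eqxx.
Qed.

Lemma card_new_bad_pairs :
  #|new_bad_pairs| <= 'C(#|right_next|, 2)
    + #|right_next| * (#|Xhat k phi i.+1| - #|right_next|)
    + #|right_next| * #|Xhat k phi i.+2|.
Proof.
have sub : new_bad_pairs \subset pairs right_next
    :|: setX right_next (Xhat k phi i.+1 :\: right_next)
    :|: setX right_next (Xhat k phi i.+2).
  apply/subsetP => -[b c]; rewrite inE /= => /and3P[bW lt_bc le_c].
  have ge_c : i.+1 <= g c.
    by move: bW; rewrite inE => /andP[/eqP <- _]; apply: PhiR_homo (ltnW lt_bc).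
  rewrite !in_setU !in_setX bW /=.
  have [cW|cW] := boolP (c \in right_next); first by rewrite inE /= bW cW lt_bc.
  rewrite in_setD cW !inE /=.
  have [-> //|ne_c] := eqVneq (g c) i.+2; first by rewrite orbT.
  by rewrite (_ : g c == i.+1) ?orbT //; apply/eqP; lia.
apply: leq_trans (subset_leq_card sub) _.
apply: leq_trans (leq_card_setU _ _) _; rewrite cardsX leq_add2r.
apply: leq_trans (leq_card_setU _ _) _; rewrite cardsX card_pairs leq_add2l.
by rewrite cardsD (setIidPr right_next_sub_Xhat).
Qed.

Lemma card_Xhat_le_left :
  #|Xhat k phi i.-1| + #|Xhat k phi i| <= #|left_i| + #|left_low| + 1.
Proof.
have i_gt0 := PhiR_gt0 z.
have disj : [disjoint Xhat k phi i.-1 & Xhat k phi i].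
  by rewrite disjoints_subset; apply/subsetP => v; rewrite !inE => /eqP ->; lia.
have sub : Xhat k phi i.-1 :|: Xhat k phi i \subset z |: (left_i :|: left_low).
  apply/subsetP => v; rewrite !inE => g_v.
  have [//|vz] := eqVneq v z; rewrite /=.
  have lt_vz : v < z.
    rewrite ltn_neqAle le_z_of_PhiR_le ?andbT; first exact: vz.
    by case/orP: g_v => /eqP ->; lia.
  have := PhiR_le_label lt_vz; have := label_le_PhiR lt_vz.
  by rewrite lt_vz; case/orP: g_v => /eqP ->; lia.
rewrite -card_disjointU //; apply: leq_trans (subset_leq_card sub) _.
by rewrite cardsU1 addnC leq_add ?leq_card_setU ?leq_b1.
Qed.

Hypothesis phi_opt : forall psi : 'I_n -> 'I_n -> nat,
  edge_labeling k psi -> monotone psi -> num_bad phi <= num_bad psi.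

Lemma Xhat_bound_at_z :
  #|Xhat k phi i.-1| + #|Xhat k phi i| <=
  #|Xhat k phi i.+1| + #|Xhat k phi i.+2| + 2.
Proof.
have no_gain : #|left_i| * #|right_i| + 'C(#|left_low|, 2) <= #|new_bad_pairs|.
  have := phi_opt relabel_edge_labeling relabel_monotone.
  by have := num_bad_relabel; lia.
have := exchange_arith (subset_leq_card right_next_sub_right) right_i_gt0
  (subset_leq_card right_next_sub_Xhat) (leq_trans no_gain card_new_bad_pairs).
move=> le_left_right; apply: leq_trans card_Xhat_le_left _.
by rewrite (_ : 2 = 1 + 1) // addnA leq_add2r.
Qed.

End Relabel.

End PhiR.

Theorem corollary4p10 (k n : nat) (phi : 'I_n -> 'I_n -> nat) :
  2 <= k ->
  edge_labeling k phi -> monotone phi ->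
  (forall psi : 'I_n -> 'I_n -> nat,
      edge_labeling k psi -> monotone psi -> num_bad phi <= num_bad psi) ->
  forall j : nat, 1 <= j <= k.-1 ->
    #|Xhat k phi j.-1| + #|Xhat k phi j| <=
    #|Xhat k phi j.+1| + #|Xhat k phi j.+2| + 2.
Proof.
(* 2 <= k is implied by 1 <= j <= k.-1. *)
move=> _ phi_lab phi_mono phi_opt j /andP[j_gt0 j_lt_k].
have Xhat0 m : (forall v, PhiR k phi v != m) -> #|Xhat k phi m| = 0.
  by move=> no_m; apply: eq_card0 => v; rewrite inE (negbTE (no_m v)).
have [v0 v0_le_j|none_le_j] := pickP (fun v => PhiR k phi v <= j); last first.
  have none_m m v : m <= j -> PhiR k phi v != m.
    by move=> le_mj; apply: contraFneq (none_le_j v) => ->.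
  by rewrite (Xhat0 j.-1) ?(Xhat0 j) // => v; apply: none_m; rewrite ?leq_pred.
have [z z_le_j after_z] :=
  exists_last_ord (P := fun v => PhiR k phi v <= j) v0_le_j.
set i := PhiR k phi z in z_le_j *.
have above_z (w : 'I_n) : z < w -> i < PhiR k phi w.
  by move/after_z; rewrite -ltnNge; apply: leq_ltn_trans.
have gap m (v : 'I_n) : i < m <= j -> PhiR k phi v != m.
  case/andP=> lt_im le_mj; apply/eqP => g_v.
  have [/(PhiR_homo phi_lab phi_mono)|/after_z] := leqP v z;
  by rewrite g_v; lia.
have i_lt_k : i < k by lia.
have := Xhat_bound_at_z phi_lab phi_mono i_lt_k above_z phi_opt.
rewrite -/i => bound.
case: (ltngtP i j) z_le_j => [lt_ij|//|eq_ij] _; last by rewrite -eq_ij.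
have [eq_j|ne_j] := eqVneq j i.+1.
  have Xhat_j : #|Xhat k phi i.+1| = 0 by apply: Xhat0 => v; apply: gap; lia.
  by rewrite eq_j /= Xhat_j in bound *; lia.
by rewrite (Xhat0 j.-1) ?(Xhat0 j) // => v; apply: gap; lia.
Qed.
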